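(* In the VI setting below, let $(u_k,\Delta_k)\subset\mathbb{R}^n\times(0,\infty)$ with $u_k\to u$ and $\Delta_k\to0$. Then there exists $K\in\mathbb{N}$ such that $\mathcal P(u_k,\Delta_k)\subseteq\mathcal B(u)$ and $\mathcal G(u_k,\Delta_k)\subseteq\partial_BS(u)$ for all $k\ge K$. In particular, $\sup_{G\in\mathcal G(u_k,\Delta_k)}\inf_{W\in\partial_BS(u)}\|G-W\|\to0$.
   Context: VI setting: $A\in\mathbb{R}^{n\times n}$ symmetric positive definite with smallest/largest eigenvalues $\lambda_{\min},\lambda_{\max}$; $\|v\|_1=\sum_i|v_i|$. For $u\in\mathbb{R}^n$, $S(u)=y$ is the unique solution of $\langle Ay,v-y\rangle+\|v\|_1-\|y\|_1\ge\langle u,v-y\rangle$ for all $v$; equivalently there is $q$ with $Ay+q=u$, $y_iq_i=|y_i|$, $|q_i|\le1$, and then $q=u-Ay$. $S$ is globally Lipschitz. Index sets (for $y=S(u)$, $q=u-Ay$): $\mathcal A_s(u)=\{i:|q_i|<1\}$, $\mathcal I(u)=\{i:y_i\neq0\}$, $\mathcal B(u)=\{i:y_i=0,|q_i|=1\}$. Let $L_y=1/\lambda_{\min}$, $L_q=\lambda_{\max}/\lambda_{\min}+1$. Possibly biactive indices: $\mathcal P(u,\Delta):=\{i: |y_i|<L_y\Delta \text{ and } ||q_i|-1|<L_q\Delta\}$. For $\mathcal N\subseteq\{1,\dots,n\}$: $A(\mathcal N)_{ij}=A_{ij}$ if $i,j\notin\mathcal N$, $A(\mathcal N)_{ij}=0$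 if $i\ne j$ and ($i\in\mathcal N$ or $j\in\mathcal N$), $A(\mathcal N)_{ii}=1$ if $i\in\mathcal N$; $\chi(\mathcal N)$ is diagonal with $\chi(\mathcal N)_{ii}=1$ for $i\notin\mathcal N$, $0$ otherwise. Define $\mathcal G(u,\Delta):=\{A(\mathcal A_s(u)\cup\mathcal B_0)^{-1}\chi(\mathcal A_s(u)\cup\mathcal B_0):\mathcal B_0\subseteq\mathcal P(u,\Delta)\}$. $\partial_BS(u)$: all limits $\lim_jS'(u_j)$ with $u_j\to u$ and $S$ differentiable at $u_j$. *)

(* Stdlib (classical reals). Vectors in R^n are functions nat -> R,
   matrices are nat -> nat -> R; only indices < n are meaningful. *)
From Stdlib Require Import Reals Lra List ClassicalEpsilon.
Import ListNotations.
Open Scope R_scope.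

Definition vec := nat -> R.
Definition mat := nat -> nat -> R.

Definition sumR (n : nat) (f : nat -> R) : R := fold_right Rplus 0 (map f (seq 0 n)).

Definition dot (n : nat) (x y : vec) : R := sumR n (fun i => x i * y i).
Definition norm1 (n : nat) (x : vec) : R := sumR n (fun i => Rabs (x i)).
Definition vnorm (n : nat) (x : vec) : R := sqrt (dot n x x).
Definition mv (n : nat) (M : mat) (x : vec) : vec := fun i => sumR n (fun j => M i j * x j).
Definition mm (n : nat) (M N : mat) : mat := fun i j => sumR n (fun k => M i k * N k j).
Definition mnorm (n : nat) (M : mat) : R := sqrt (sumR n (fun i => sumR n (fun j => M i j ^ 2))).
Definition idm (i j : nat) : R := if Nat.eqb i j then 1 else 0.

Definition symmetric (n : nat) (A : mat) : Prop :=
  forall i j, (i < n)%nat -> (j < n)%nat -> A i j = A j i.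
Definition pos_def (n : nat) (A : mat) : Prop :=
  forall x : vec, (exists i, (i < n)%nat /\ x i <> 0) -> dot n x (mv n A x) > 0.
Definition is_eigenvalue (n : nat) (A : mat) (l : R) : Prop :=
  exists x : vec, (exists i, (i < n)%nat /\ x i <> 0) /\
    forall i, (i < n)%nat -> mv n A x i = l * x i.
Definition is_min_eigenvalue n A l : Prop :=
  is_eigenvalue n A l /\ forall m, is_eigenvalue n A m -> l <= m.
Definition is_max_eigenvalue n A l : Prop :=
  is_eigenvalue n A l /\ forall m, is_eigenvalue n A m -> m <= l.

Definition solves_VI (n : nat) (A : mat) (u y : vec) : Prop :=
  forall v : vec,
    dot n (mv n A y) (fun i => v i - y i) + norm1 n v - norm1 n y
      >= dot n u (fun i => v i - y i).

Definition qv (n : nat) (A : mat) (S : vec -> vec) (u : vec) : vec :=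
  fun i => u i - mv n A (S u) i.

Definition As_set n A S u (i : nat) : Prop := (i < n)%nat /\ Rabs (qv n A S u i) < 1.
Definition I_set n (S : vec -> vec) u (i : nat) : Prop := (i < n)%nat /\ S u i <> 0.
Definition B_set n A S u (i : nat) : Prop :=
  (i < n)%nat /\ S u i = 0 /\ Rabs (qv n A S u i) = 1.

Definition L_y (lmin : R) : R := 1 / lmin.
Definition L_q (lmin lmax : R) : R := lmax / lmin + 1.

Definition P_set n A S (lmin lmax : R) u (D : R) (i : nat) : Prop :=
  (i < n)%nat /\ Rabs (S u i) < L_y lmin * D /\
  Rabs (Rabs (qv n A S u i) - 1) < L_q lmin lmax * D.

Definition inb (P : Prop) : bool :=
  if excluded_middle_informative P then true else false.

Definition A_N (A : mat) (N : nat -> Prop) : mat :=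
  fun i j => if orb (inb (N i)) (inb (N j)) then idm i j else A i j.
Definition chi_N (N : nat -> Prop) : mat :=
  fun i j => if Nat.eqb i j then (if inb (N i) then 0 else 1) else 0.

Definition is_inverse (n : nat) (M Minv : mat) : Prop :=
  forall i j, (i < n)%nat -> (j < n)%nat ->
    mm n M Minv i j = idm i j /\ mm n Minv M i j = idm i j.

Definition G_set n A S lmin lmax u D (G : mat) : Prop :=
  exists B0 : nat -> Prop, (forall i, B0 i -> P_set n A S lmin lmax u D i) /\
    let N := fun i => As_set n A S u i \/ B0 i in
    exists Minv, is_inverse n (A_N A N) Minv /\
      forall i j, (i < n)%nat -> (j < n)%nat -> G i j = mm n Minv (chi_N N) i j.

Definition has_derivative (n : nat) (S : vec -> vec) (u : vec) (J : mat) : Prop :=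
  forall eps, eps > 0 -> exists delta, delta > 0 /\
    forall h : vec, vnorm n h < delta ->
      vnorm n (fun i => S (fun k => u k + h k) i - S u i - mv n J h i) <= eps * vnorm n h.

Definition in_dB (n : nat) (S : vec -> vec) (u : vec) (W : mat) : Prop :=
  exists (uj : nat -> vec) (Jj : nat -> mat),
    (forall i, (i < n)%nat -> Un_cv (fun j => uj j i) (u i)) /\
    (forall j, has_derivative n S (uj j) (Jj j)) /\
    (forall i k, (i < n)%nat -> (k < n)%nat -> Un_cv (fun j => Jj j i k) (W i k)).

(* Write y = S u and q = u - A y. A sign-pattern N with A_s(u) ⊆ N ⊆ {i : y_i = 0}
   is realised by points arbitrarily close to u at which every index is strictly
   complementary (y_i = 0 and |q_i| < 1 on N, y_i ≠ 0 off N); near such a point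
   the pattern is frozen, so S is affine there with slope A(N)^{-1} χ(N).  Hence
   every such matrix lies in ∂_B S(u).  Since S is Lipschitz, y(u_k) → y and
   q(u_k) → q, so for large k the indices that are possibly biactive at
   (u_k, Δ_k) are biactive at u, and A_s(u) ⊆ A_s(u_k) ⊆ {i : y_i = 0}; thus every
   element of G(u_k, Δ_k) is of the above form. *)
From Stdlib Require Import Reals Lra Lia Psatz List ClassicalEpsilon Classical.
Open Scope R_scope.

Lemma sumR_S m f : sumR (S m) f = sumR m f + f m.
Proof.
  unfold sumR. rewrite seq_S, map_app, fold_right_app. simpl.
  induction (map f (seq 0 m)) as [|a l IH]; simpl; [lra | rewrite IH; lra].
Qed.

Lemma sumR_ext m f g : (forall i, (i < m)%nat -> f i = g i) -> sumR m f = sumR m g.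
Proof.
  induction m as [|m IH]; intros H; [reflexivity|]. rewrite !sumR_S.
  rewrite IH by (intros; apply H; lia). rewrite H by lia. reflexivity.
Qed.

Lemma sumR_plus m f g : sumR m (fun i => f i + g i) = sumR m f + sumR m g.
Proof. induction m as [|m IH]; [unfold sumR; simpl; lra|]. rewrite !sumR_S, IH. lra. Qed.

Lemma sumR_minus m f g : sumR m (fun i => f i - g i) = sumR m f - sumR m g.
Proof. induction m as [|m IH]; [unfold sumR; simpl; lra|]. rewrite !sumR_S, IH. lra. Qed.

Lemma sumR_scal m c f : sumR m (fun i => c * f i) = c * sumR m f.
Proof. induction m as [|m IH]; [unfold sumR; simpl; lra|]. rewrite !sumR_S, IH. lra. Qed.

Lemma sumR_le m f g : (forall i, (i < m)%nat -> f i <= g i) -> sumR m f <= sumR m g.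
Proof.
  induction m as [|m IH]; intro H; [unfold sumR; simpl; lra|]. rewrite !sumR_S.
  assert (f m <= g m) by (apply H; lia).
  assert (sumR m f <= sumR m g) by (apply IH; intros; apply H; lia). lra.
Qed.

Lemma sumR_eq0 m f : (forall i, (i < m)%nat -> f i = 0) -> sumR m f = 0.
Proof.
  induction m as [|m IH]; intro H; [reflexivity|].
  rewrite sumR_S, IH by (intros; apply H; lia). rewrite H by lia. lra.
Qed.

Lemma sumR_nonneg m f : (forall i, (i < m)%nat -> 0 <= f i) -> 0 <= sumR m f.
Proof. intro H. rewrite <- (sumR_eq0 m (fun _ => 0)) by auto. now apply sumR_le. Qed.

Lemma sumR_single m f k : (k < m)%nat ->
  (forall i, (i < m)%nat -> i <> k -> f i = 0) -> sumR m f = f k.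
Proof.
  induction m as [|m IH]; intros Hk H; [lia|]. rewrite sumR_S.
  destruct (Nat.eq_dec k m) as [->|Hne].
  - rewrite sumR_eq0 by (intros; apply H; lia). lra.
  - rewrite IH by (lia || (intros; apply H; lia)). rewrite (H m) by lia. lra.
Qed.

Lemma sumR_ge_term m f k : (k < m)%nat ->
  (forall i, (i < m)%nat -> 0 <= f i) -> f k <= sumR m f.
Proof.
  intros Hk H.
  assert (E : sumR m (fun i => if Nat.eqb i k then f i else 0) = f k).
  { rewrite (sumR_single m _ k Hk); [now rewrite Nat.eqb_refl|].
    intros i _ Hne. now rewrite (proj2 (Nat.eqb_neq i k) Hne). }
  rewrite <- E. apply sumR_le. intros i Hi.
  destruct (Nat.eqb i k); [lra | now apply H].
Qed.

Lemma sumR_abs m f : Rabs (sumR m f) <= sumR m (fun i => Rabs (f i)).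
Proof.
  induction m as [|m IH]; [unfold sumR; simpl; rewrite Rabs_R0; lra|]. rewrite !sumR_S.
  eapply Rle_trans; [apply Rabs_triang | lra].
Qed.

Lemma sumR_swap m p f :
  sumR m (fun i => sumR p (fun j => f i j)) = sumR p (fun j => sumR m (fun i => f i j)).
Proof.
  induction m as [|m IH]; [symmetry; apply sumR_eq0; reflexivity|].
  rewrite sumR_S, IH, <- sumR_plus. apply sumR_ext. intros. now rewrite sumR_S.
Qed.

Lemma sumR_idm m i f : (i < m)%nat -> sumR m (fun l => idm i l * f l) = f i.
Proof.
  intro Hi. rewrite (sumR_single m _ i Hi).
  - unfold idm. rewrite Nat.eqb_refl. ring.
  - intros l _ Hne. unfold idm. rewrite (proj2 (Nat.eqb_neq i l)) by auto. ring.
Qed.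

Lemma sumR_Cauchy_Schwarz m b x :
  (sumR m (fun i => b i * x i)) ^ 2 <= sumR m (fun i => b i ^ 2) * sumR m (fun i => x i ^ 2).
Proof.
  induction m as [|m IH]; [unfold sumR; simpl; nra|]. rewrite !sumR_S.
  assert (HB : 0 <= sumR m (fun i => b i ^ 2)) by (apply sumR_nonneg; intros; nra).
  assert (HX : 0 <= sumR m (fun i => x i ^ 2)) by (apply sumR_nonneg; intros; nra).
  set (P := sumR m (fun i => b i * x i)) in *.
  set (B := sumR m (fun i => b i ^ 2)) in *.
  set (X := sumR m (fun i => x i ^ 2)) in *.
  (* the cross term is controlled by AM-GM: 2 P b x <= B x^2 + b^2 X *)
  assert (Hcross : 2 * P * b m * x m <= B * x m ^ 2 + b m ^ 2 * X).
  { assert (P ^ 2 * (b m * x m) ^ 2 <= B * X * (b m * x m) ^ 2)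
      by (apply Rmult_le_compat_r; [apply pow2_ge_0 | exact IH]).
    assert (0 <= (B * x m ^ 2 - b m ^ 2 * X) ^ 2) by apply pow2_ge_0.
    assert ((2 * P * b m * x m) ^ 2 <= (B * x m ^ 2 + b m ^ 2 * X) ^ 2) by nra.
    assert (0 <= B * x m ^ 2 + b m ^ 2 * X) by nra. nra. }
  nra.
Qed.

Definition sqnorm (n : nat) (x : vec) : R := sumR n (fun i => x i ^ 2).

Lemma sqnorm_nonneg n x : 0 <= sqnorm n x.
Proof. apply sumR_nonneg; intros; nra. Qed.

Lemma sqnorm_ge_term n x i : (i < n)%nat -> x i ^ 2 <= sqnorm n x.
Proof. intro Hi. apply (sumR_ge_term n (fun j => x j ^ 2)); auto. intros; nra. Qed.

Lemma Rabs_le_vnorm n h j : (j < n)%nat -> Rabs (h j) <= vnorm n h.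
Proof.
  intro Hj. unfold vnorm, dot. rewrite <- sqrt_Rsqr_abs. apply sqrt_le_1_alt.
  unfold Rsqr. apply (sumR_ge_term n (fun i => h i * h i)); auto. intros; nra.
Qed.

Lemma vnorm_eq0 n x : (forall i, (i < n)%nat -> x i = 0) -> vnorm n x = 0.
Proof.
  intro H. unfold vnorm, dot. rewrite sumR_eq0; [apply sqrt_0|].
  intros i Hi. rewrite H by auto. ring.
Qed.

Lemma mv_ext n M x x' : (forall j, (j < n)%nat -> x j = x' j) ->
  forall i, mv n M x i = mv n M x' i.
Proof. intros H i. apply sumR_ext. intros j Hj. now rewrite H. Qed.

Lemma mv_plus n M x z i : mv n M (fun j => x j + z j) i = mv n M x i + mv n M z i.
Proof. unfold mv. rewrite <- sumR_plus. apply sumR_ext. intros; ring. Qed.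

Lemma mv_minus n M x z i : mv n M (fun j => x j - z j) i = mv n M x i - mv n M z i.
Proof. unfold mv. rewrite <- sumR_minus. apply sumR_ext. intros; ring. Qed.

Lemma mv_scal n M x t i : mv n M (fun j => t * x j) i = t * mv n M x i.
Proof. unfold mv. rewrite <- sumR_scal. apply sumR_ext. intros; ring. Qed.

Definition mabs (n : nat) (M : mat) : R := sumR n (fun i => sumR n (fun j => Rabs (M i j))).

Lemma mabs_nonneg n M : 0 <= mabs n M.
Proof. apply sumR_nonneg; intros; apply sumR_nonneg; intros; apply Rabs_pos. Qed.

Lemma Rabs_mv_le n M x i B : (i < n)%nat -> 0 <= B ->
  (forall j, (j < n)%nat -> Rabs (x j) <= B) -> Rabs (mv n M x i) <= mabs n M * B.
Proof.
  intros Hi HB H. unfold mv. eapply Rle_trans; [apply sumR_abs|].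
  apply Rle_trans with (sumR n (fun j => Rabs (M i j)) * B).
  - rewrite Rmult_comm, <- sumR_scal. apply sumR_le. intros j Hj. rewrite Rabs_mult.
    specialize (H j Hj). assert (0 <= Rabs (M i j)) by apply Rabs_pos. nra.
  - apply Rmult_le_compat_r; auto.
    apply (sumR_ge_term n (fun i => sumR n (fun j => Rabs (M i j)))); auto.
    intros; apply sumR_nonneg; intros; apply Rabs_pos.
Qed.

Lemma pos_def_diag n A i : (i < n)%nat -> pos_def n A -> 0 < A i i.
Proof.
  intros Hi Hp.
  set (e := fun j : nat => if Nat.eqb j i then 1 else 0).
  assert (He : forall j, (j < n)%nat -> j <> i -> e j = 0).
  { intros j _ Hne. unfold e. now rewrite (proj2 (Nat.eqb_neq j i) Hne). }
  assert (Hei : e i = 1) by (unfold e; now rewrite Nat.eqb_refl).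
  assert (Hq : dot n e (mv n A e) = A i i).
  { unfold dot. rewrite (sumR_single n _ i Hi) by (intros j Hj Hne; rewrite He; auto; ring).
    unfold mv. rewrite (sumR_single n _ i Hi) by (intros j Hj Hne; rewrite He; auto; ring).
    rewrite Hei. ring. }
  rewrite <- Hq. apply Hp. exists i. split; [exact Hi | lra].
Qed.

Definition schur (A : mat) (m : nat) : mat := fun i j => A i j - A i m * A m j / A m m.

Lemma quad_schur m A x : symmetric (S m) A -> A m m <> 0 ->
  dot (S m) x (mv (S m) A x) =
  dot m x (mv m (schur A m) x) + A m m * (x m + sumR m (fun j => A m j * x j) / A m m) ^ 2.
Proof.
  intros Hs Ha. unfold dot, mv, schur. rewrite sumR_S.
  set (a := A m m) in *. set (beta := sumR m (fun j => A m j * x j)).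
  rewrite (sumR_ext m (fun i => x i * sumR (S m) (fun j => A i j * x j))
             (fun i => x i * sumR m (fun j => A i j * x j) + x m * (A m i * x i))).
  2:{ intros i Hi. rewrite sumR_S, (Hs i m) by lia. ring. }
  rewrite (sumR_ext m (fun i => x i * sumR m (fun j => (A i j - A i m * A m j / a) * x j))
             (fun i => x i * sumR m (fun j => A i j * x j) - beta / a * (A m i * x i))).
  2:{ intros i Hi.
      rewrite (sumR_ext m _ (fun j => A i j * x j - A i m / a * (A m j * x j)))
        by (intros; unfold Rdiv; ring).
      rewrite sumR_minus, sumR_scal, (Hs i m) by lia. fold beta. unfold a in *. field. exact Ha. }
  rewrite sumR_plus, sumR_minus, !sumR_scal, sumR_S. fold beta. unfold a in *. field. exact Ha.
Qed.

Lemma symmetric_schur m A : symmetric (S m) A -> symmetric m (schur A m).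
Proof.
  intros Hs i j Hi Hj. unfold schur.
  rewrite (Hs j i), (Hs j m), (Hs m i) by lia. unfold Rdiv. ring.
Qed.

Lemma pos_def_schur m A : symmetric (S m) A -> pos_def (S m) A -> pos_def m (schur A m).
Proof.
  intros Hs Hp x Hx.
  assert (Ha : 0 < A m m) by (apply (pos_def_diag (S m)); auto).
  set (beta := sumR m (fun j => A m j * x j)).
  (* extend x by the coordinate that kills the square term of the Schur identity *)
  set (xe := fun j => if Nat.eqb j m then - beta / A m m else x j).
  assert (Hxe : forall j, (j < m)%nat -> xe j = x j).
  { intros j Hj. unfold xe. now rewrite (proj2 (Nat.eqb_neq j m)) by lia. }
  assert (Hpos : dot (S m) xe (mv (S m) A xe) > 0).
  { apply Hp. destruct Hx as [i [Hi Hxi]]. exists i. split; [lia|]. now rewrite Hxe. }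
  rewrite quad_schur in Hpos by (auto; lra).
  rewrite (sumR_ext m (fun j => A m j * xe j) (fun j => A m j * x j)) in Hpos
    by (intros; now rewrite Hxe).
  fold beta in Hpos.
  replace (xe m + beta / A m m) with 0 in Hpos
    by (unfold xe; rewrite Nat.eqb_refl; field; lra).
  replace (dot m xe (mv m (schur A m) xe)) with (dot m x (mv m (schur A m) x)) in Hpos.
  - simpl in Hpos. lra.
  - unfold dot. apply sumR_ext. intros j Hj. rewrite Hxe, (mv_ext m _ xe x Hxe); auto.
Qed.

Lemma schur_coercive_step (a c B sx t beta Q : R) :
  0 < a -> 0 < c -> 0 <= B -> 0 <= sx -> beta ^ 2 <= B * sx -> c * sx <= Q ->
  sx + t ^ 2 <= ((1 + 2 * B / (a * a)) / c + 2 / a) * (Q + a * (t + beta / a) ^ 2).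
Proof.
  intros Ha Hc HB Hsx Hbeta HQ.
  assert (Hs : (beta / a) ^ 2 <= B / (a * a) * sx).
  { replace ((beta / a) ^ 2) with (beta ^ 2 * / (a * a)) by (field; lra).
    unfold Rdiv. rewrite Rmult_assoc, (Rmult_comm (/ (a * a))), <- Rmult_assoc.
    apply Rmult_le_compat_r; [left; apply Rinv_0_lt_compat; nra | lra]. }
  remember (beta / a) as s eqn:Es. remember (t + s) as r eqn:Er.
  remember (B / (a * a)) as b eqn:Eb.
  assert (Hb : 0 <= b) by (subst b; apply Rmult_le_pos; [lra | left; apply Rinv_0_lt_compat; nra]).
  replace (1 + 2 * B / (a * a)) with (1 + 2 * b) by (subst b; unfold Rdiv; ring).
  assert (Ht : t ^ 2 <= 2 * r ^ 2 + 2 * s ^ 2) by (subst r; pose proof (pow2_ge_0 (t + 2 * s)); nra).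
  assert (Hsx' : (1 + 2 * b) * sx <= (1 + 2 * b) / c * Q).
  { unfold Rdiv. rewrite Rmult_assoc. apply Rmult_le_compat_l; [lra|].
    apply Rmult_le_reg_l with c; [lra|]. field_simplify; lra. }
  assert (Hr : 2 * r ^ 2 = 2 / a * (a * r ^ 2)) by (field; lra).
  assert (0 <= a * r ^ 2) by (apply Rmult_le_pos; [lra | apply pow2_ge_0]).
  assert (0 <= (1 + 2 * b) / c) by (apply Rmult_le_pos; [lra | left; apply Rinv_0_lt_compat; lra]).
  assert (0 <= 2 / a) by (apply Rmult_le_pos; [lra | left; apply Rinv_0_lt_compat; lra]).
  assert (0 <= Q) by nra.
  nra.
Qed.

Lemma pos_def_coercive n A : symmetric n A -> pos_def n A ->
  exists c, 0 < c /\ forall x, c * sqnorm n x <= dot n x (mv n A x).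
Proof.
  revert A. induction n as [|m IH]; intros A Hs Hp.
  - exists 1. split; [lra|]. intro x. unfold sqnorm, dot, sumR. simpl. lra.
  - assert (Ha : 0 < A m m) by (apply (pos_def_diag (S m)); auto).
    destruct (IH (schur A m) (symmetric_schur m A Hs) (pos_def_schur m A Hs Hp))
      as [c [Hc Hco]].
    set (B := sumR m (fun j => A m j ^ 2)).
    assert (HB : 0 <= B) by (apply sumR_nonneg; intros; apply pow2_ge_0).
    set (K := (1 + 2 * B / (A m m * A m m)) / c + 2 / A m m).
    assert (HK : 0 < K).
    { assert (0 <= 2 * B / (A m m * A m m))
        by (apply Rmult_le_pos; [lra | left; apply Rinv_0_lt_compat; nra]).
      assert (0 < (1 + 2 * B / (A m m * A m m)) / c) by (apply Rdiv_lt_0_compat; lra).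
      assert (0 < 2 / A m m) by (apply Rdiv_lt_0_compat; lra).
      unfold K. lra. }
    exists (/ K). split; [now apply Rinv_0_lt_compat|]. intro x.
    rewrite quad_schur by (auto; lra).
    assert (Hstep := schur_coercive_step (A m m) c B (sqnorm m x) (x m)
                       (sumR m (fun j => A m j * x j)) (dot m x (mv m (schur A m) x))
                       Ha Hc HB (sqnorm_nonneg m x)
                       (sumR_Cauchy_Schwarz m (A m) x) (Hco x)).
    fold K in Hstep.
    replace (sqnorm (S m) x) with (sqnorm m x + x m ^ 2) by (unfold sqnorm; now rewrite sumR_S).
    apply Rmult_le_reg_l with K; [exact HK|].
    rewrite <- Rmult_assoc, Rinv_r by lra. lra.
Qed.

Definition complementary (q y : R) : Prop := Rabs q <= 1 /\ y * q = Rabs y.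

Lemma complementary_iff q y :
  complementary q y <-> forall a, q * (a - y) <= Rabs a - Rabs y.
Proof.
  split.
  - intros [Hq Hy] a.
    assert (q * a <= Rabs a).
    { eapply Rle_trans; [apply Rle_abs|]. rewrite Rabs_mult.
      pose proof (Rabs_pos a). nra. }
    nra.
  - intro H. pose proof (H 0) as H0. pose proof (H (2 * y)) as H2.
    pose proof (H (y + 1)) as Hp. pose proof (H (y - 1)) as Hm.
    rewrite Rabs_R0 in H0. rewrite Rabs_mult, (Rabs_right 2) in H2 by lra.
    pose proof (Rabs_triang y 1). pose proof (Rabs_triang y (Ropp 1)).
    assert (Rabs (Ropp 1) = 1) by (rewrite Rabs_Ropp; apply Rabs_R1).
    pose proof Rabs_R1. unfold Rminus in Hm.
    split; [apply Rabs_le | ]; lra.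
Qed.

Lemma complementary_abs_q q y : complementary q y -> y <> 0 -> Rabs q = 1.
Proof.
  intros [Hq Hy] Hy0. apply Rle_antisym; [exact Hq|].
  assert (Hpos : 0 < Rabs y) by now apply Rabs_pos_lt.
  apply Rmult_le_reg_l with (Rabs y); [exact Hpos|].
  rewrite <- Rabs_mult, Hy, Rabs_Rabsolu. lra.
Qed.

Lemma complementary_shift q y d : complementary q y -> y <> 0 -> Rabs d < Rabs y ->
  complementary q (y + d).
Proof.
  intros Hc Hy0 Hd. pose proof (complementary_abs_q q y Hc Hy0) as Hq1.
  destruct Hc as [Hq Hy]. split; [exact Hq|].
  apply Rabs_def2 in Hd as [Hd1 Hd2].
  destruct (Rlt_or_le 0 y) as [Hpos|Hneg].
  - rewrite Rabs_right in Hy, Hd1, Hd2 by lra.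
    assert (q = 1) by (apply Rmult_eq_reg_l with y; lra).
    subst q. rewrite Rabs_right by lra. ring.
  - rewrite Rabs_left1 in Hy, Hd1, Hd2 by lra.
    assert (q = -1) by (apply Rmult_eq_reg_l with y; lra).
    subst q. rewrite Rabs_left by lra. ring.
Qed.

Lemma complementary_push q y t : Rabs q = 1 -> complementary q y -> 0 < t ->
  complementary q (y + t * q) /\ y + t * q <> 0.
Proof.
  intros Hq1 [_ Hy] Ht.
  assert (Hqq : q * q = 1).
  { rewrite <- (Rabs_right (q * q)) by (apply Rle_ge; nra). now rewrite Rabs_mult, Hq1, Rmult_1_l. }
  assert (Hval : (y + t * q) * q = Rabs y + t) by nra.
  assert (Habs : Rabs (y + t * q) = Rabs y + t).
  { rewrite <- (Rmult_1_r (Rabs (y + t * q))), <- Hq1, <- Rabs_mult, Hval.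
    apply Rabs_right. pose proof (Rabs_pos y). lra. }
  split; [split; [lra | congruence]|].
  intro H0. rewrite H0, Rabs_R0 in Habs. pose proof (Rabs_pos y). lra.
Qed.

Definition vi_gap (n : nat) (A : mat) (w y v : vec) : R :=
  sumR n (fun i => Rabs (v i) - Rabs (y i) - (w i - mv n A y i) * (v i - y i)).

Lemma solves_VI_gap n A w y : solves_VI n A w y <-> forall v, 0 <= vi_gap n A w y v.
Proof.
  assert (E : forall v, dot n (mv n A y) (fun i => v i - y i) + norm1 n v - norm1 n y
                        - dot n w (fun i => v i - y i) = vi_gap n A w y v).
  { intro v. unfold vi_gap, dot, norm1. rewrite <- sumR_plus, <- !sumR_minus.
    apply sumR_ext. intros; ring. }
  split; intros H v; specialize (H v); rewrite <- E in *; lra.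
Qed.

Lemma solves_VI_iff n A w y : solves_VI n A w y <->
  forall i, (i < n)%nat -> complementary (w i - mv n A y i) (y i).
Proof.
  rewrite solves_VI_gap. split.
  - intros H i Hi. apply complementary_iff. intro a.
    specialize (H (fun j => if Nat.eqb j i then a else y j)).
    unfold vi_gap in H. rewrite (sumR_single n _ i Hi) in H.
    + rewrite Nat.eqb_refl in H. lra.
    + intros j _ Hne. rewrite (proj2 (Nat.eqb_neq j i) Hne). ring.
  - intros H v. apply sumR_nonneg. intros i Hi.
    pose proof (proj1 (complementary_iff _ _) (H i Hi) (v i)). lra.
Qed.

Lemma VI_monotone n A w y w' y' : solves_VI n A w y -> solves_VI n A w' y' ->
  dot n (fun i => y' i - y i) (mv n A (fun i => y' i - y i))
    <= sumR n (fun i => (w' i - w i) * (y' i - y i)).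
Proof.
  rewrite !solves_VI_gap. intros H H'. specialize (H y'). specialize (H' y).
  assert (E : sumR n (fun i => (w' i - w i) * (y' i - y i))
              - dot n (fun i => y' i - y i) (mv n A (fun i => y' i - y i))
              = vi_gap n A w y y' + vi_gap n A w' y' y).
  { unfold vi_gap, dot. rewrite <- sumR_minus, <- sumR_plus. apply sumR_ext.
    intros i Hi. rewrite mv_minus. ring. }
  lra.
Qed.

Lemma VI_unique n A w y y' : pos_def n A ->
  solves_VI n A w y -> solves_VI n A w y' -> forall i, (i < n)%nat -> y i = y' i.
Proof.
  intros Hp H H' i Hi. apply NNPP. intro Hne.
  assert (Hpos : dot n (fun j => y' j - y j) (mv n A (fun j => y' j - y j)) > 0).
  { apply Hp. exists i. split; [exact Hi | lra]. }
  pose proof (VI_monotone n A w y w y' H H') as Hm.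
  rewrite sumR_eq0 in Hm by (intros; ring). lra.
Qed.

Lemma VI_lipschitz n A c w y w' y' :
  0 < c -> (forall x, c * sqnorm n x <= dot n x (mv n A x)) ->
  solves_VI n A w y -> solves_VI n A w' y' ->
  c * c * sqnorm n (fun i => y' i - y i) <= sqnorm n (fun i => w' i - w i).
Proof.
  intros Hc Hco H H'.
  pose proof (Hco (fun i => y' i - y i)) as Hq.
  pose proof (VI_monotone n A w y w' y' H H') as Hm.
  pose proof (sqnorm_nonneg n (fun i => y' i - y i)) as HX.
  pose proof (sqnorm_nonneg n (fun i => w' i - w i)) as HY.
  remember (sqnorm n (fun i => y' i - y i)) as X.
  remember (sqnorm n (fun i => w' i - w i)) as Y.
  remember (sumR n (fun i => (w' i - w i) * (y' i - y i))) as p.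
  assert (HCS : p ^ 2 <= Y * X)
    by (subst p X Y; exact (sumR_Cauchy_Schwarz n (fun i => w' i - w i) (fun i => y' i - y i))).
  destruct (Req_dec X 0) as [->|HX0]; [lra|].
  assert (Hcp : c * X <= p) by lra.
  assert (0 <= c * X) by (apply Rmult_le_pos; lra).
  assert ((c * X) ^ 2 <= p ^ 2) by (apply pow_incr; lra).
  apply Rmult_le_reg_r with X; [lra|].
  replace (c * c * X * X) with ((c * X) ^ 2) by ring. lra.
Qed.

Lemma Un_cv_const c : Un_cv (fun _ => c) c.
Proof. intros eps He. exists 0%nat. intros. unfold Rdist. rewrite Rminus_diag, Rabs_R0. lra. Qed.

Lemma Un_cv_ext a b l : (forall k, a k = b k) -> Un_cv a l -> Un_cv b l.
Proof. intros E H eps He. destruct (H eps He) as [N HN]. exists N. intros k Hk. rewrite <- E. auto. Qed.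

Lemma Un_cv_sumR m (f : nat -> nat -> R) (l : nat -> R) :
  (forall j, (j < m)%nat -> Un_cv (fun k => f k j) (l j)) ->
  Un_cv (fun k => sumR m (f k)) (sumR m l).
Proof.
  induction m as [|m IH]; intro H; [exact (Un_cv_const 0)|].
  rewrite sumR_S. apply Un_cv_ext with (fun k => sumR m (f k) + f k m);
    [intros; now rewrite sumR_S|].
  apply CV_plus; [apply IH; intros; apply H; lia | apply H; lia].
Qed.

Lemma Un_cv_eventually_lt a l r : Un_cv a l -> l < r ->
  exists K, forall k, (K <= k)%nat -> a k < r.
Proof.
  intros H Hlr. destruct (H (r - l)) as [K HK]; [lra|]. exists K. intros k Hk.
  specialize (HK k Hk). unfold Rdist in HK. apply Rabs_def2 in HK. lra.
Qed.

Lemma Un_cv_eventually_gt a l r : Un_cv a l -> r < l ->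
  exists K, forall k, (K <= k)%nat -> r < a k.
Proof.
  intros H Hlr. destruct (H (l - r)) as [K HK]; [lra|]. exists K. intros k Hk.
  specialize (HK k Hk). unfold Rdist in HK. apply Rabs_def2 in HK. lra.
Qed.

Lemma eventually_all_indices n (P : nat -> nat -> Prop) :
  (forall i, (i < n)%nat -> exists K, forall k, (K <= k)%nat -> P i k) ->
  exists K, forall i k, (i < n)%nat -> (K <= k)%nat -> P i k.
Proof.
  induction n as [|n IH]; intro H; [exists 0%nat; intros; lia|].
  destruct IH as [K1 HK1]; [intros; apply H; lia|].
  destruct (H n) as [K2 HK2]; [lia|].
  exists (max K1 K2). intros i k Hi Hk. destruct (Nat.eq_dec i n) as [->|Hne].
  - apply HK2; lia.
  - apply HK1; lia.
Qed.

Lemma VI_solution_continuous n A c S us u :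
  0 < c -> (forall x, c * sqnorm n x <= dot n x (mv n A x)) ->
  (forall w, solves_VI n A w (S w)) ->
  (forall i, (i < n)%nat -> Un_cv (fun k => us k i) (u i)) ->
  forall i, (i < n)%nat -> Un_cv (fun k => S (us k) i) (S u i).
Proof.
  intros Hc Hco HS Hu i Hi eps He.
  assert (Hsq : Un_cv (fun k => sqnorm n (fun j => us k j - u j)) 0).
  { rewrite <- (sumR_eq0 n (fun _ => 0)) by auto. apply Un_cv_sumR. intros j Hj.
    replace 0 with ((u j - u j) ^ 2) by ring.
    apply Un_cv_ext with (fun k => (us k j - u j) * ((us k j - u j) * 1)); [intros; ring|].
    apply CV_mult; [|apply CV_mult]; try apply Un_cv_const;
      apply CV_minus; auto; apply Un_cv_const. }
  assert (Hpos : 0 < c * c * (eps * eps)) by (apply Rmult_lt_0_compat; nra).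
  destruct (Un_cv_eventually_lt _ _ _ Hsq Hpos) as [K HK].
  exists K. intros k Hk. specialize (HK k Hk). unfold Rdist.
  pose proof (VI_lipschitz n A c u (S u) (us k) (S (us k)) Hc Hco (HS u) (HS (us k))).
  pose proof (sqnorm_ge_term n (fun j => S (us k) j - S u j) i Hi).
  assert ((S (us k) i - S u i) ^ 2 < eps * eps).
  { apply Rmult_lt_reg_l with (c * c); [nra|]. simpl in *. nra. }
  apply Rabs_def1; nra.
Qed.

Lemma qv_continuous n A c S us u :
  0 < c -> (forall x, c * sqnorm n x <= dot n x (mv n A x)) ->
  (forall w, solves_VI n A w (S w)) ->
  (forall i, (i < n)%nat -> Un_cv (fun k => us k i) (u i)) ->
  forall i, (i < n)%nat -> Un_cv (fun k => qv n A S (us k) i) (qv n A S u i).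
Proof.
  intros Hc Hco HS Hu i Hi. unfold qv. apply CV_minus; auto. apply Un_cv_sumR.
  intros j Hj. apply CV_mult; [apply Un_cv_const | eapply VI_solution_continuous; eauto].
Qed.

(* [a k] and [b k] play the roles of the thresholds [L_y Δ_k] and [L_q Δ_k]. *)
Lemma complementary_limit_pattern (y q : R) (ys qs a b : nat -> R) :
  complementary q y -> (forall k, complementary (qs k) (ys k)) ->
  Un_cv ys y -> Un_cv qs q -> Un_cv a 0 -> Un_cv b 0 ->
  exists K, forall k, (K <= k)%nat ->
    (Rabs (ys k) < a k -> Rabs (Rabs (qs k) - 1) < b k -> y = 0 /\ Rabs q = 1) /\
    (Rabs q < 1 -> Rabs (qs k) < 1) /\
    (Rabs (qs k) < 1 -> y = 0).
Proof.
  intros Hc Hcs Hy Hq Ha Hb. pose proof (proj1 Hc) as Hq1.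
  destruct (Req_dec y 0) as [Hy0|Hy0].
  - destruct (Rlt_or_le (Rabs q) 1) as [Hlt|Hge].
    + set (e := (1 - Rabs q) / 2).
      destruct (Un_cv_eventually_lt _ _ (1 - e) (cv_cvabs _ _ Hq) ltac:(unfold e; lra))
        as [K1 HK1].
      destruct (Un_cv_eventually_lt _ _ e Hb ltac:(unfold e; lra)) as [K2 HK2].
      exists (max K1 K2). intros k Hk.
      specialize (HK1 k ltac:(lia)). specialize (HK2 k ltac:(lia)).
      split; [|split]; intros H.
      * intro Hbk. apply Rabs_def2 in Hbk. unfold e in *. lra.
      * unfold e in *. lra.
      * exact Hy0.
    + exists 0%nat. intros k _. split; [|split]; intros; lra.
  - pose proof (complementary_abs_q q y Hc Hy0) as Hq1'.
    pose proof (Rabs_pos_lt y Hy0) as Hypos.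
    destruct (Un_cv_eventually_gt _ _ (Rabs y / 2) (cv_cvabs _ _ Hy) ltac:(lra)) as [K1 HK1].
    destruct (Un_cv_eventually_lt _ _ (Rabs y / 2) Ha ltac:(lra)) as [K2 HK2].
    exists (max K1 K2). intros k Hk.
    specialize (HK1 k ltac:(lia)). specialize (HK2 k ltac:(lia)).
    assert (Hyk : ys k <> 0) by (intro E; rewrite E, Rabs_R0 in HK1; lra).
    pose proof (complementary_abs_q _ _ (Hcs k) Hyk).
    split; [|split]; intros; lra.
Qed.

Lemma inb_true (P : Prop) : P -> inb P = true.
Proof. intro H. unfold inb. now destruct (excluded_middle_informative P). Qed.

Lemma inb_false (P : Prop) : ~ P -> inb P = false.
Proof. intro H. unfold inb. now destruct (excluded_middle_informative P). Qed.

Section ReducedInverse.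

Variables (n : nat) (A : mat) (N : nat -> Prop) (Minv G : mat).
Hypothesis Hinv : is_inverse n (A_N A N) Minv.
Hypothesis HG : forall i j, (i < n)%nat -> (j < n)%nat -> G i j = mm n Minv (chi_N N) i j.

Lemma A_N_mul_G i j : (i < n)%nat -> (j < n)%nat ->
  sumR n (fun k => A_N A N i k * G k j) = chi_N N i j.
Proof.
  intros Hi Hj.
  rewrite (sumR_ext n _ (fun k => sumR n (fun l => A_N A N i k * Minv k l * chi_N N l j))).
  2:{ intros k Hk. rewrite HG by auto. unfold mm. rewrite <- sumR_scal.
      apply sumR_ext. intros; ring. }
  rewrite sumR_swap.
  rewrite (sumR_ext n _ (fun l => idm i l * chi_N N l j)).
  2:{ intros l Hl. rewrite <- (proj1 (Hinv i l Hi Hl)). unfold mm. symmetry.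
      rewrite (Rmult_comm (sumR n _)), <- sumR_scal. apply sumR_ext. intros; ring. }
  exact (sumR_idm n i (fun l => chi_N N l j) Hi).
Qed.

Lemma G_row_in i j : (i < n)%nat -> (j < n)%nat -> N i -> G i j = 0.
Proof.
  intros Hi Hj Ni. pose proof (A_N_mul_G i j Hi Hj) as H.
  assert (Hrow : forall k, A_N A N i k = idm i k) by (intro k; unfold A_N; now rewrite inb_true).
  rewrite (sumR_ext n _ (fun k => idm i k * G k j)) in H by (intros; now rewrite Hrow).
  rewrite (sumR_idm n i (fun k => G k j) Hi) in H.
  rewrite H. unfold chi_N. destruct (Nat.eqb i j); [now rewrite inb_true | reflexivity].
Qed.

Lemma A_mul_G_row_out i j : (i < n)%nat -> (j < n)%nat -> ~ N i ->
  sumR n (fun k => A i k * G k j) = idm i j.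
Proof.
  intros Hi Hj Ni. pose proof (A_N_mul_G i j Hi Hj) as H.
  rewrite (sumR_ext n (fun k => A_N A N i k * G k j) (fun k => A i k * G k j)) in H.
  - rewrite H. unfold chi_N, idm. destruct (Nat.eqb i j); [now rewrite inb_false | reflexivity].
  - intros k Hk. destruct (classic (N k)) as [Nk|Nk].
    + rewrite (G_row_in k j Hk Hj Nk). ring.
    + unfold A_N. now rewrite (inb_false _ Ni), (inb_false _ Nk).
Qed.

Lemma mv_G_in h i : (i < n)%nat -> N i -> mv n G h i = 0.
Proof. intros Hi Ni. apply sumR_eq0. intros j Hj. rewrite G_row_in by auto. ring. Qed.

Lemma mv_A_G_out h i : (i < n)%nat -> ~ N i -> mv n A (mv n G h) i = h i.
Proof.
  intros Hi Ni. unfold mv.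
  rewrite (sumR_ext n _ (fun k => sumR n (fun j => A i k * (G k j * h j))))
    by (intros; now rewrite <- sumR_scal).
  rewrite sumR_swap, (sumR_ext n _ (fun j => idm i j * h j));
    [exact (sumR_idm n i h Hi)|].
  intros j Hj. rewrite <- (A_mul_G_row_out i j Hi Hj Ni). symmetry.
  rewrite (Rmult_comm (sumR n _)), <- sumR_scal. apply sumR_ext. intros; ring.
Qed.

End ReducedInverse.

Definition strictly_complementary n A (S : vec -> vec) (N : nat -> Prop) (w : vec) : Prop :=
  forall i, (i < n)%nat ->
    (N i -> S w i = 0 /\ Rabs (qv n A S w i) < 1) /\ (~ N i -> S w i <> 0).

Lemma finite_min_pos n (P : nat -> Prop) (f : nat -> R) :
  (forall i, (i < n)%nat -> P i -> 0 < f i) ->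
  exists m, 0 < m /\ forall i, (i < n)%nat -> P i -> m <= f i.
Proof.
  induction n as [|n IH]; intro H; [exists 1; split; [lra | intros; lia]|].
  destruct IH as [m [Hm Hm']]; [intros; apply H; auto; lia|].
  destruct (classic (P n)) as [Pn|nPn].
  - exists (Rmin m (f n)). split; [apply Rmin_pos; auto|].
    intros i Hi Pi. destruct (Nat.eq_dec i n) as [->|Hne]; [apply Rmin_r|].
    eapply Rle_trans; [apply Rmin_l | apply Hm'; auto; lia].
  - exists m. split; auto. intros i Hi Pi.
    destruct (Nat.eq_dec i n) as [->|Hne]; [contradiction | apply Hm'; auto; lia].
Qed.

Lemma strictly_complementary_margin n A S N w : strictly_complementary n A S N w ->
  exists m, 0 < m /\ forall i, (i < n)%nat ->
    (N i -> Rabs (qv n A S w i) <= 1 - m) /\ (~ N i -> m <= Rabs (S w i)).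
Proof.
  intro Hst.
  destruct (finite_min_pos n N (fun i => 1 - Rabs (qv n A S w i))) as [m1 [Hm1 Hm1']].
  { intros i Hi Ni. pose proof (proj1 (Hst i Hi) Ni). lra. }
  destruct (finite_min_pos n (fun i => ~ N i) (fun i => Rabs (S w i))) as [m2 [Hm2 Hm2']].
  { intros i Hi Ni. apply Rabs_pos_lt, (proj2 (Hst i Hi) Ni). }
  exists (Rmin m1 m2). split; [now apply Rmin_pos|].
  pose proof (Rmin_l m1 m2). pose proof (Rmin_r m1 m2).
  intros i Hi. split; intro HNi; [specialize (Hm1' i Hi HNi) | specialize (Hm2' i Hi HNi)]; lra.
Qed.

Section StrictComplementarity.

Variables (n : nat) (A : mat) (S : vec -> vec) (N : nat -> Prop) (Minv G : mat).
Hypothesis Hp : pos_def n A.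
Hypothesis HS : forall w, solves_VI n A w (S w).
Hypothesis Hinv : is_inverse n (A_N A N) Minv.
Hypothesis HG : forall i j, (i < n)%nat -> (j < n)%nat -> G i j = mm n Minv (chi_N N) i j.

(* Near a strictly complementary point the active pattern cannot change, so
   [S] is affine there with slope [G]. *)
Lemma VI_affine_near w : strictly_complementary n A S N w ->
  exists delta, 0 < delta /\ forall h, vnorm n h < delta ->
    solves_VI n A (fun k => w k + h k) (fun i => S w i + mv n G h i).
Proof.
  intro Hst.
  assert (Hc : forall i, (i < n)%nat -> complementary (qv n A S w i) (S w i))
    by (apply solves_VI_iff, HS).
  destruct (strictly_complementary_margin n A S N w Hst) as [m [Hm Hmargin]].
  pose proof (mabs_nonneg n G) as Hg. pose proof (mabs_nonneg n A) as Ha.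
  set (g := mabs n G) in *. set (a := mabs n A) in *.
  remember (1 + a * g + g) as M eqn:EM.
  assert (HM : 1 <= M) by (subst M; nra).
  exists (m / M). split; [apply Rdiv_lt_0_compat; lra|].
  intros h Hh.
  assert (Hv : 0 <= vnorm n h) by apply sqrt_pos.
  assert (HMv : M * vnorm n h < m).
  { apply Rmult_lt_reg_r with (/ M); [apply Rinv_0_lt_compat; lra|].
    rewrite Rmult_comm, <- Rmult_assoc, Rinv_l by lra. lra. }
  set (v := vnorm n h) in *.
  assert (Hh_i : forall i, (i < n)%nat -> Rabs (h i) <= v) by (intros; now apply Rabs_le_vnorm).
  assert (HGh : forall i, (i < n)%nat -> Rabs (mv n G h i) <= g * v)
    by (intros; now apply Rabs_mv_le).
  assert (HAGh : forall i, (i < n)%nat -> Rabs (mv n A (mv n G h) i) <= a * (g * v))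
    by (intros; apply Rabs_mv_le; auto; apply Rmult_le_pos; auto).
  apply solves_VI_iff. intros i Hi.
  replace (w i + h i - mv n A (fun j => S w j + mv n G h j) i)
    with (qv n A S w i + h i - mv n A (mv n G h) i) by (unfold qv; rewrite mv_plus; ring).
  destruct (classic (N i)) as [Ni|Ni].
  - destruct (proj1 (Hst i Hi) Ni) as [Hy0 Hq].
    rewrite Hy0, (mv_G_in n A N Minv G Hinv HG) by auto.
    rewrite Rplus_0_r. split; [|rewrite Rabs_R0; ring].
    pose proof (proj1 (Hmargin i Hi) Ni). specialize (Hh_i i Hi). specialize (HAGh i Hi).
    pose proof (Rabs_triang (qv n A S w i + h i) (- mv n A (mv n G h) i)).
    pose proof (Rabs_triang (qv n A S w i) (h i)). rewrite Rabs_Ropp in *.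
    unfold Rminus. subst M. nra.
  - rewrite (mv_A_G_out n A N Minv G Hinv HG) by auto.
    replace (qv n A S w i + h i - h i) with (qv n A S w i) by ring.
    apply complementary_shift; auto; [apply (proj2 (Hst i Hi) Ni)|].
    pose proof (proj2 (Hmargin i Hi) Ni). specialize (HGh i Hi). subst M. nra.
Qed.

Lemma has_derivative_strict w : strictly_complementary n A S N w -> has_derivative n S w G.
Proof.
  intros Hst eps He. destruct (VI_affine_near w Hst) as [delta [Hd Hnear]].
  exists delta. split; [exact Hd|]. intros h Hh.
  rewrite vnorm_eq0.
  - apply Rmult_le_pos; [lra | apply sqrt_pos].
  - intros i Hi. rewrite <- (VI_unique n A _ _ _ Hp (Hnear h Hh) (HS _) i Hi). ring.
Qed.

End StrictComplementarity.

Definition zero_in (N : nat -> Prop) (x : vec) : vec := fun i => if inb (N i) then 0 else x i.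
Definition zero_out (N : nat -> Prop) (x : vec) : vec := fun i => if inb (N i) then x i else 0.

Definition shifted_point n A (N : nat -> Prop) (y q : vec) (t : R) : vec :=
  fun i => mv n A (fun j => y j + t * zero_in N q j) i + (q i - t * zero_out N q i).

Lemma inv_INR_2_cv0 : Un_cv (fun j => / (INR j + 2)) 0.
Proof.
  apply cv_infty_cv_0. intro M. destruct (INR_unbounded M) as [K HK].
  exists K. intros j Hj. apply le_INR in Hj. lra.
Qed.

Lemma inv_INR_2_bounds j : 0 < / (INR j + 2) <= 1.
Proof.
  pose proof (pos_INR j). split; [apply Rinv_0_lt_compat; lra|].
  rewrite <- Rinv_1. apply Rinv_le_contravar; lra.
Qed.

Section Sandwich.

Variables (n : nat) (A : mat) (S : vec -> vec) (u : vec) (N : nat -> Prop) (Minv G : mat).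
Hypothesis Hp : pos_def n A.
Hypothesis HS : forall w, solves_VI n A w (S w).
Hypothesis Hinv : is_inverse n (A_N A N) Minv.
Hypothesis HG : forall i j, (i < n)%nat -> (j < n)%nat -> G i j = mm n Minv (chi_N N) i j.
Hypothesis HAs : forall i, (i < n)%nat -> As_set n A S u i -> N i.
Hypothesis HN0 : forall i, (i < n)%nat -> N i -> S u i = 0.

Lemma complementary_at_u i : (i < n)%nat -> complementary (qv n A S u i) (S u i).
Proof. intro Hi. exact (proj1 (solves_VI_iff n A u (S u)) (HS u) i Hi). Qed.

Lemma abs_qv_out i : (i < n)%nat -> ~ N i -> Rabs (qv n A S u i) = 1.
Proof.
  intros Hi Ni. destruct (Req_dec (S u i) 0) as [Hy|Hy].
  - destruct (Rlt_or_le (Rabs (qv n A S u i)) 1) as [Hlt|Hge].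
    + exfalso. apply Ni, HAs; [exact Hi | split; auto].
    + pose proof (proj1 (complementary_at_u i Hi)). lra.
  - exact (complementary_abs_q _ _ (complementary_at_u i Hi) Hy).
Qed.

Let ys t : vec := fun j => S u j + t * zero_in N (qv n A S u) j.
Let qs t : vec := fun j => qv n A S u j - t * zero_out N (qv n A S u) j.

(* Pushing [S u] off zero along [q] outside [N] and shrinking [q] on [N] makes
   every index strictly complementary without changing the pattern [N]. *)
Lemma shifted_entries t i : 0 < t <= 1 -> (i < n)%nat ->
  (N i -> ys t i = 0 /\ Rabs (qs t i) < 1) /\
  (~ N i -> ys t i <> 0 /\ complementary (qs t i) (ys t i)).
Proof.
  intros Ht Hi. pose proof (complementary_at_u i Hi) as Hc.
  unfold ys, qs, zero_in, zero_out. split; intro HNi.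
  - rewrite inb_true, HN0 by auto. split; [ring|].
    replace (qv n A S u i - t * qv n A S u i) with ((1 - t) * qv n A S u i) by ring.
    rewrite Rabs_mult, (Rabs_right (1 - t)) by lra.
    pose proof (proj1 Hc). pose proof (Rabs_pos (qv n A S u i)). nra.
  - rewrite inb_false by auto. rewrite Rmult_0_r, Rminus_0_r.
    destruct (complementary_push _ _ t (abs_qv_out i Hi HNi) Hc ltac:(lra)). auto.
Qed.

Lemma shifted_solution t i : 0 < t <= 1 -> (i < n)%nat ->
  S (shifted_point n A N (S u) (qv n A S u) t) i = ys t i.
Proof.
  intros Ht Hi. symmetry. apply (VI_unique n A (shifted_point n A N (S u) (qv n A S u) t));
    auto.
  apply solves_VI_iff. intros j Hj.
  replace (shifted_point n A N (S u) (qv n A S u) t j - mv n A (ys t) j) with (qs t j)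
    by (unfold shifted_point, ys, qs; ring).
  destruct (shifted_entries t j Ht Hj) as [Hin Hout].
  destruct (classic (N j)) as [Nj|Nj]; [|now apply Hout].
  destruct (Hin Nj) as [-> Hq]. split; [lra | rewrite Rabs_R0; ring].
Qed.

Lemma shifted_strictly_complementary t : 0 < t <= 1 ->
  strictly_complementary n A S N (shifted_point n A N (S u) (qv n A S u) t).
Proof.
  intros Ht i Hi. rewrite (shifted_solution t i Ht Hi).
  replace (qv n A S (shifted_point n A N (S u) (qv n A S u) t) i) with (qs t i).
  - destruct (shifted_entries t i Ht Hi) as [Hin Hout].
    split; [exact Hin | intro Ni; apply (Hout Ni)].
  - change (qs t i = shifted_point n A N (S u) (qv n A S u) t i
              - mv n A (S (shifted_point n A N (S u) (qv n A S u) t)) i).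
    rewrite (mv_ext n A _ (ys t) (fun j Hj => shifted_solution t j Ht Hj)).
    unfold shifted_point, ys, qs. ring.
Qed.

Lemma shifted_point_cv i : (i < n)%nat ->
  Un_cv (fun j => shifted_point n A N (S u) (qv n A S u) (/ (INR j + 2)) i) (u i).
Proof.
  intro Hi. set (d := mv n A (zero_in N (qv n A S u)) i - zero_out N (qv n A S u) i).
  apply Un_cv_ext with (fun j => u i + / (INR j + 2) * d).
  { intro j. unfold shifted_point, d, qv. rewrite mv_plus, mv_scal. ring. }
  assert (L : Un_cv (fun j => u i + / (INR j + 2) * d) (u i + 0 * d))
    by (apply CV_plus; [apply Un_cv_const | apply CV_mult; [apply inv_INR_2_cv0 | apply Un_cv_const]]).
  now rewrite Rmult_0_l, Rplus_0_r in L.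
Qed.

Lemma in_dB_sandwich : in_dB n S u G.
Proof.
  exists (fun j => shifted_point n A N (S u) (qv n A S u) (/ (INR j + 2))), (fun _ => G).
  split; [|split].
  - exact shifted_point_cv.
  - intro j. apply (has_derivative_strict n A S N Minv G); auto.
    apply shifted_strictly_complementary, inv_INR_2_bounds.
  - intros i k _ _. apply Un_cv_const.
Qed.

End Sandwich.

Lemma index_sets_eventually n A c lmin lmax (S : vec -> vec) us Ds u :
  0 < c -> (forall x, c * sqnorm n x <= dot n x (mv n A x)) ->
  (forall w, solves_VI n A w (S w)) ->
  (forall i, (i < n)%nat -> Un_cv (fun k => us k i) (u i)) -> Un_cv Ds 0 ->
  exists K, forall i k, (i < n)%nat -> (K <= k)%nat ->
    (P_set n A S lmin lmax (us k) (Ds k) i -> B_set n A S u i) /\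
    (As_set n A S u i -> As_set n A S (us k) i) /\
    (As_set n A S (us k) i -> S u i = 0).
Proof.
  intros Hc Hco HS Hu HD.
  apply eventually_all_indices. intros i Hi.
  assert (Hscale : forall L, Un_cv (fun k => L * Ds k) 0).
  { intro L. rewrite <- (Rmult_0_r L). apply CV_mult; [apply Un_cv_const | exact HD]. }
  destruct (complementary_limit_pattern (S u i) (qv n A S u i)
              (fun k => S (us k) i) (fun k => qv n A S (us k) i) _ _
              (proj1 (solves_VI_iff _ _ _ _) (HS u) i Hi)
              (fun k => proj1 (solves_VI_iff _ _ _ _) (HS (us k)) i Hi)
              (VI_solution_continuous n A c S us u Hc Hco HS Hu i Hi)
              (qv_continuous n A c S us u Hc Hco HS Hu i Hi)
              (Hscale (L_y lmin)) (Hscale (L_q lmin lmax))) as [K HK].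
  exists K. intros k Hk. destruct (HK k Hk) as (H1 & H2 & H3).
  unfold P_set, B_set, As_set. firstorder.
Qed.

Lemma G_set_in_dB n A lmin lmax (S : vec -> vec) w D u G :
  pos_def n A -> (forall w, solves_VI n A w (S w)) ->
  (forall i, P_set n A S lmin lmax w D i -> B_set n A S u i) ->
  (forall i, (i < n)%nat -> As_set n A S u i -> As_set n A S w i) ->
  (forall i, (i < n)%nat -> As_set n A S w i -> S u i = 0) ->
  G_set n A S lmin lmax w D G -> in_dB n S u G.
Proof.
  intros Hp HS HPB HAs HA0 [B0 [HB0 HG]]. cbv zeta in HG. destruct HG as [Minv [Hinv HG]].
  apply (in_dB_sandwich n A S u _ Minv G Hp HS Hinv HG).
  - intros i Hi HAu. left. now apply HAs.
  - intros i Hi [HAw | HB]; [now apply HA0|].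
    exact (proj1 (proj2 (HPB i (HB0 i HB)))).
Qed.

Theorem lemma4p4 (n : nat) (A : mat) (lmin lmax : R) (S : vec -> vec)
    (us : nat -> vec) (Ds : nat -> R) (u : vec) :
  symmetric n A -> pos_def n A ->
  is_min_eigenvalue n A lmin -> is_max_eigenvalue n A lmax ->
  (forall w, solves_VI n A w (S w)) ->
  (forall k, 0 < Ds k) ->
  (forall i, (i < n)%nat -> Un_cv (fun k => us k i) (u i)) ->
  Un_cv Ds 0 ->
  (exists K : nat, forall k, (K <= k)%nat ->
      (forall i, P_set n A S lmin lmax (us k) (Ds k) i -> B_set n A S u i) /\
      (forall G, G_set n A S lmin lmax (us k) (Ds k) G -> in_dB n S u G)) /\
  (forall eps, eps > 0 -> exists K : nat, forall k, (K <= k)%nat ->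
      forall G, G_set n A S lmin lmax (us k) (Ds k) G ->
        exists W, in_dB n S u W /\ mnorm n (fun i j => G i j - W i j) < eps).
Proof.
  (* The spectral data enter only through the constants [L_y], [L_q], whose
     values are irrelevant since [Ds k -> 0]. *)
  intros Hs Hp _ _ HS _ Hu HD.
  destruct (pos_def_coercive n A Hs Hp) as [c [Hc Hco]].
  destruct (index_sets_eventually n A c lmin lmax S us Ds u Hc Hco HS Hu HD) as [K HK].
  assert (Hpart : forall k, (K <= k)%nat ->
      (forall i, P_set n A S lmin lmax (us k) (Ds k) i -> B_set n A S u i) /\
      (forall G, G_set n A S lmin lmax (us k) (Ds k) G -> in_dB n S u G)).
  { intros k Hk.
    assert (HPB : forall i, P_set n A S lmin lmax (us k) (Ds k) i -> B_set n A S u i)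
      by (intros i HP; exact (proj1 (HK i k (proj1 HP) Hk) HP)).
    split; [exact HPB|]. intros G.
    apply (G_set_in_dB n A lmin lmax S (us k) (Ds k) u G Hp HS HPB);
      intros i Hi; apply (HK i k Hi Hk). }
  split; [exists K; exact Hpart|].
  intros eps He. exists K. intros k Hk G HG. exists G.
  split; [exact (proj2 (Hpart k Hk) G HG)|].
  unfold mnorm. rewrite sumR_eq0, sqrt_0; [lra|].
  intros i _. apply sumR_eq0. intros j _. simpl. ring.
Qed.
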